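(* Let $0<r\le 1/2$, $0\le\rho\le 1$, and let $\alpha$ satisfy $0\le\alpha<r$, with $\alpha$ the asymptotic red edge fraction of the Biased Preferential Attachment Model described in the context. Define $$K_B=\frac12\left(\frac{r\rho}{\alpha+\rho(1-\alpha)}+\frac{1-r}{\alpha\rho+1-\alpha}\right),\qquad K_R=\frac12\left(\frac{r}{\alpha+\rho(1-\alpha)}+\frac{\rho(1-r)}{\alpha\rho+1-\alpha}\right),$$ and $\beta_B=1+1/K_B$, $\beta_R=1+1/K_R$. Then $$\frac{1}{\beta_R-1}>\frac{2}{\beta_B-1}-1,$$ equivalently $2K_B-1<K_R$.
   Context: In the BPAM, nodes arrive sequentially and are labeled red with probability $r$ (minority, $0<r\le1/2$) or blue with probability $1-r$. Each new node attaches by preferential attachment, with a cross-label edge accepted only with probability $\rho\in[0,1]$ (retrying otherwise), and every node has outdegree $d$. $\alpha$ denotes the limit as $N\to\infty$ of the expected fraction of the total degree $2Nd$ belonging to red nodes. It satisfies the power inequality $\alpha<r$. $\beta_B$ and $\beta_R$ are the power-law exponents of the asymptotic degree distributions of the blue and red communities, respectively. *)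

From Stdlib Require Import Reals Lra.
Open Scope R_scope.

(* Constants K_B, K_R of the BPAM degree-distribution exponents,
   as functions of r (minority fraction), rho (acceptance probability)
   and alpha (asymptotic red edge fraction). *)
Definition K_B (r rho alpha : R) : R :=
  / 2 * (r * rho / (alpha + rho * (1 - alpha)) + (1 - r) / (alpha * rho + 1 - alpha)).

Definition K_R (r rho alpha : R) : R :=
  / 2 * (r / (alpha + rho * (1 - alpha)) + rho * (1 - r) / (alpha * rho + 1 - alpha)).

Definition beta_B (r rho alpha : R) : R := 1 + / K_B r rho alpha.
Definition beta_R (r rho alpha : R) : R := 1 + / K_R r rho alpha.

From Stdlib Require Import Reals Lra.
Open Scope R_scope.

(* Put
   [u = alpha (1 - rho)]; the two denominators of [K_B], [K_R] are then
   [rho + u] and [1 - u], and clearing them turns [K_R - 2 K_B + 1] into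
   [(r - u)(1 + 2u) + (1 - r)(rho^2 + (1 - rho) u)], which is positive
   because [u <= alpha < r].  The only degenerate case is [rho = alpha = 0],
   where [rho + u = 0]; there Rocq's [r / 0 = 0] gives [K_R = 0] while
   [2 K_B - 1 = - r < 0]. *)

Lemma Rinv_add_inv_sub (k : R) : / (1 + / k - 1) = k.
Proof.
  replace (1 + / k - 1) with (/ k) by ring.
  apply Rinv_inv.
Qed.

Section BPAM_exponents.

Variables r rho alpha : R.

Let u := alpha * (1 - rho).

Let gap_numerator := (r - u) * (1 + 2 * u) + (1 - r) * (rho ^ 2 + (1 - rho) * u).

Lemma K_R_sub_2K_B_add1 :
  0 < rho + u -> 0 < 1 - u ->
  K_R r rho alpha - 2 * K_B r rho alpha + 1
  = gap_numerator / (2 * (rho + u) * (1 - u)).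
Proof.
  unfold K_R, K_B, gap_numerator, u; intros Hred Hblue.
  field; repeat split; lra.
Qed.

Hypotheses (r_le1 : r <= 1) (rho_ge0 : 0 <= rho) (rho_le1 : rho <= 1)
  (alpha_ge0 : 0 <= alpha) (alpha_lt_r : alpha < r).

Lemma u_ge0 : 0 <= u.
Proof. unfold u; nra. Qed.

Lemma u_le_alpha : u <= alpha.
Proof. unfold u; nra. Qed.

Lemma gap_numerator_gt0 : 0 < gap_numerator.
Proof.
  pose proof u_ge0; pose proof u_le_alpha.
  unfold gap_numerator.
  assert (0 < (r - u) * (1 + 2 * u)) by (apply Rmult_lt_0_compat; lra).
  assert (0 <= (1 - r) * (rho ^ 2 + (1 - rho) * u)) by
    (apply Rmult_le_pos; [lra | pose proof (pow2_ge_0 rho); nra]).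
  lra.
Qed.

Lemma K_R_gt_2K_B_sub1 : 2 * K_B r rho alpha - 1 < K_R r rho alpha.
Proof.
  pose proof u_ge0; pose proof u_le_alpha.
  destruct (Rle_lt_or_eq_dec 0 (rho + u)) as [Hred | Hdeg]; [lra | |].
  - assert (0 < K_R r rho alpha - 2 * K_B r rho alpha + 1); [|lra].
    rewrite K_R_sub_2K_B_add1 by lra.
    apply Rdiv_lt_0_compat; [exact gap_numerator_gt0 | nra].
  - assert (rho = 0 /\ alpha = 0) as [-> ->] by (unfold u in *; nra).
    unfold K_R, K_B; rewrite !Rmult_0_r, !Rmult_0_l, !Rplus_0_l, !Rminus_0_r.
    unfold Rdiv; rewrite Rinv_0, Rinv_1; lra.
Qed.

End BPAM_exponents.

Theorem proposition5 (r rho alpha : R) :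
  0 < r -> r <= / 2 -> 0 <= rho -> rho <= 1 -> 0 <= alpha -> alpha < r ->
  / (beta_R r rho alpha - 1) > 2 / (beta_B r rho alpha - 1) - 1.
Proof.
  intros _ r_le_half rho_ge0 rho_le1 alpha_ge0 alpha_lt_r.
  unfold beta_R, beta_B, Rdiv; rewrite !Rinv_add_inv_sub.
  apply K_R_gt_2K_B_sub1; lra.
Qed.
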